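(* For $m \ge 1$, the number $b(m)$ of odd Grassmannian involutions of $[m]$ equals $\left\lfloor \frac{(m+1)^2}{8}\right\rfloor$.
   Context: A permutation is Grassmannian if it has at most one descent; a Grassmannian involution is a Grassmannian permutation $\pi$ with $\pi^{-1}=\pi$. A permutation is odd if it has an odd number of inversions (pairs $i<j$ with $\pi_i>\pi_j$). *)

From mathcomp Require Import all_boot all_fingroup.
Set Implicit Arguments. Unset Strict Implicit. Unset Printing Implicit Defensive.

(* Permutations of [m] are represented as 'S_m, i.e. permutations of
   'I_m = {0,...,m-1} (a shift of {1,...,m}; order-preserving, so descents
   and inversions are unchanged). *)

Definition descents (m : nat) (s : 'S_m) : nat :=
  #|[set i : 'I_m | [exists j : 'I_m, (val j == (val i).+1) && (s j < s i)]]|.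

Definition inversions (m : nat) (s : 'S_m) : nat :=
  #|[set p : 'I_m * 'I_m | (p.1 < p.2) && (s p.2 < s p.1)]|.

Definition grassmannian (m : nat) (s : 'S_m) : bool := descents s <= 1.

Definition involution (m : nat) (s : 'S_m) : bool := (s^-1)%g == s.

Definition odd_inv (m : nat) (s : 'S_m) : bool := odd (inversions s).

Definition b (m : nat) : nat :=
  #|[set s : 'S_m | [&& grassmannian s, involution s & odd_inv s]]|.

From mathcomp Require Import all_boot all_fingroup zify.
Set Implicit Arguments. Unset Strict Implicit. Unset Printing Implicit Defensive.

(* A Grassmannian involution g of [0, m) is increasing on both sides of its
   descent d.  Then g a = d + 1 for a := g (d + 1) and g d = c > d, and the
   increasing runs a..d and d+1..c force c - d = d + 1 - a =: j: g exchanges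
   the adjacent blocks [a, a + j) and [a + j, a + 2j) by translation (j = 0
   being the identity).  Such a block swap has j^2 inversions, so b(m) counts
   the pairs (a, j) with j odd and a + 2j <= m, i.e. it is the sum over odd j
   of m + 1 - 2j, which is floor((m + 1)^2 / 8). *)

Definition block_swap (a j i : nat) : nat :=
  if (a <= i) && (i < a + j) then i + j
  else if (a + j <= i) && (i < a + j + j) then i - j else i.

Ltac block_swap_cases := rewrite /block_swap; repeat case: ifP => ?; lia.

Lemma block_swap_left a j i : a <= i < a + j -> block_swap a j i = i + j.
Proof. block_swap_cases. Qed.

Lemma block_swap_right a j i : a + j <= i < a + j + j -> block_swap a j i = i - j.
Proof. block_swap_cases. Qed.

Lemma block_swap_out a j i : (i < a) || (a + j + j <= i) -> block_swap a j i = i.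
Proof. block_swap_cases. Qed.

Lemma block_swapK a j : involutive (block_swap a j).
Proof.
move=> i; rewrite {2}/block_swap.
by case: (leqP a i) => ?; case: (ltnP i (a + j)) => ?;
  case: (ltnP i (a + j + j)) => ? /=; block_swap_cases.
Qed.

Lemma block_swap_lt n a j i : a + j + j <= n -> i < n -> block_swap a j i < n.
Proof. block_swap_cases. Qed.

Lemma block_swap_descent a j i :
  block_swap a j i.+1 < block_swap a j i -> i.+1 = a + j.
Proof. block_swap_cases. Qed.

Lemma block_swap_inj a j a' j' : 0 < j -> 0 < j' ->
  block_swap a j a = block_swap a' j' a -> block_swap a j a' = block_swap a' j' a' ->
  a = a' /\ j = j'.
Proof. move=> j_gt0 j'_gt0; block_swap_cases. Qed.

Section GrassmannianInvolution.

Variables (m d : nat) (g : nat -> nat).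
Hypothesis g_lt : forall i, i < m -> g i < m.
Hypothesis gK : forall i, i < m -> g (g i) = i.
Hypothesis g_incr : forall i, i.+1 < m -> i <> d -> g i < g i.+1.

Lemma incr_gap x y : x <= y -> y < m -> (y <= d) || (d < x) -> g x + (y - x) <= g y.
Proof.
elim: y => [|y IHy] xy ym side; first by move: xy; rewrite leqn0 => /eqP ->; rewrite addn0.
have [->|xy'] := eqVneq x y.+1; first by rewrite subnn addn0.
have := IHy ltac:(lia) ltac:(lia) ltac:(lia); have := g_incr (i := y) ym; lia.
Qed.

Lemma le_left i : i <= d -> i < m -> i <= g i.
Proof.
move=> id im; case: (leqP i (g i)) => // gi_lt.
have := incr_gap (ltnW gi_lt) im; rewrite gK //; lia.
Qed.

Lemma ge_right i : d < i -> i < m -> g i <= i.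
Proof.
move=> di im; case: (leqP (g i) i) => // gi_gt.
have := incr_gap (ltnW gi_gt) (g_lt im); rewrite gK //; lia.
Qed.

Lemma fixed_left i : i <= d -> i < m -> g i <= d -> g i = i.
Proof. move=> id im gid; have := le_left id im; have := le_left gid (g_lt im); rewrite gK //; lia. Qed.

Lemma fixed_right i : d < i -> i < m -> d < g i -> g i = i.
Proof. move=> di im dgi; have := ge_right di im; have := ge_right dgi (g_lt im); rewrite gK //; lia. Qed.

Lemma incr_involution_block_swap : d < m ->
  exists a j, a + j + j <= m /\ forall i, i < m -> g i = block_swap a j i.
Proof.
move=> dm; have [gd|gd] := eqVneq (g d) d.
  have fixed_le_d k : k <= d -> g k = k.
    move=> kd; have km := leq_ltn_trans kd dm.
    by apply: fixed_left => //; have := incr_gap kd dm; lia.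
  exists 0, 0; split=> // i im; rewrite block_swap_out ?orbT //.
  have [id|di] := leqP i d; first exact: fixed_le_d.
  have [gid|dgi] := leqP (g i) d; last exact: fixed_right.
  by have := fixed_le_d _ gid; rewrite gK.
set c := g d; set a := g d.+1.
have dc : d < c.
  by rewrite ltnNge; apply: contraNN gd => /(fixed_left (leqnn d) dm)/eqP.
have cm : c < m by exact: g_lt.
have gc : g c = d by rewrite gK.
have right_span : a + (c - d.+1) <= d.
  by rewrite -[X in _ <= X]gc; apply: incr_gap; rewrite ?ltnSn ?orbT.
have ad : a <= d by lia.
have ga : g a = d.+1 by rewrite gK //; lia.
have left_span : d.+1 + (d - a) <= c by rewrite -ga; apply: incr_gap; rewrite ?leqnn.
exists a, (d.+1 - a); split=> [|i im]; first lia.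
have [ia|ai] := ltnP i a.
  rewrite block_swap_out ?ia //; apply: fixed_left => //; first lia.
  by have := incr_gap (ltnW ia) (leq_ltn_trans ad dm); rewrite ga; lia.
have [id|di] := leqP i d.
  rewrite block_swap_left; last lia.
  have := incr_gap ai im; have := incr_gap id dm; rewrite ga; lia.
have [ic|ci] := leqP i c.
  rewrite block_swap_right; last lia.
  have := incr_gap (x := d.+1) di im; have := incr_gap ic cm; rewrite gc; lia.
rewrite block_swap_out; last lia.
by apply: fixed_right => //; have := incr_gap (ltnW ci) im; rewrite gc; lia.
Qed.

End GrassmannianInvolution.

Lemma sum_ltn n k : \sum_(i < n) (i < k) = minn n k.
Proof.
elim: n => [|n IHn]; first by rewrite big_ord0 min0n.
by rewrite big_ord_recr /= IHn; case: (ltnP n k) => /=; lia.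
Qed.

Lemma card_ord_interval n a k : a <= k <= n -> #|[set i : 'I_n | a <= i < k]| = k - a.
Proof.
move=> /andP[ak kn]; rewrite -[k in RHS](minn_idPr kn) -[a in RHS](minn_idPr (leq_trans ak kn)).
rewrite -!sum_ltn -sum1_card big_mkcond /=.
suff -> : \sum_(i < n) (i < k) = \sum_(i < n) (if i \in [set i : 'I_n | a <= i < k] then 1 else 0)
    + \sum_(i < n) (i < a) by rewrite addnK.
rewrite -big_split; apply: eq_bigr => i _ /=; rewrite inE.
by case: (ltnP i a) => ia; case: (ltnP i k) => ik /=; lia.
Qed.

Section GrassmannianPerm.

Variable n : nat.
Local Notation N := n.+1.
Implicit Types s : 'S_N.

Definition perm_val s (i : nat) : nat := s (inord i).

Lemma perm_valE s (i : 'I_N) : perm_val s i = s i.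
Proof. by rewrite /perm_val inord_val. Qed.

Lemma grassmannian_incr s : grassmannian s ->
  exists2 d, d < N & forall i, i.+1 < N -> i <> d -> perm_val s i < perm_val s i.+1.
Proof.
rewrite /grassmannian /descents.
set D := [set i | _]; move=> /card_le1_eqP D_le1.
have [d dN D_d] : exists2 d, d < N & forall x : 'I_N, x \in D -> val x = d.
  have [D0|[x Dx]] := set_0Vmem D; first by exists 0 => // x; rewrite D0 inE.
  by exists x => // y Dy; rewrite (D_le1 _ _ Dy Dx).
exists d => // i iN id; rewrite /perm_val.
have iN' : i < N by lia.
case: (ltngtP (s (inord i)) (s (inord i.+1))) => // [gt|/val_inj/perm_inj/(congr1 val)].
  have /D_d : inord i \in D.
    by rewrite inE; apply/existsP; exists (inord i.+1); rewrite gt andbT /= !inordK.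
  by rewrite /= inordK.
by rewrite /= !inordK //; lia.
Qed.

Lemma inversions_block_swap s a j : a + j + j <= N ->
  (forall i : 'I_N, s i = block_swap a j i :> nat) -> inversions s = j * j.
Proof.
move=> ajN sE; rewrite /inversions.
have -> : [set p : 'I_N * 'I_N | (p.1 < p.2) && (s p.2 < s p.1)] =
    setX [set i : 'I_N | a <= i < a + j] [set i : 'I_N | a + j <= i < a + j + j].
  apply/setP => -[x y]; rewrite !inE /= !sE.
  by move: (ltn_ord x) (ltn_ord y); rewrite /block_swap; repeat case: ifP => ?; lia.
by rewrite cardsX !card_ord_interval ?addKn //; lia.
Qed.

Lemma grassmannian_block_swap s a j :
  (forall i : 'I_N, s i = block_swap a j i :> nat) -> grassmannian s.
Proof.
move=> sE; apply/card_le1_eqP => x y; rewrite !inE.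
move=> /existsP[k /andP[/eqP kx sk]] /existsP[k' /andP[/eqP k'y sk']].
move: sk sk'; rewrite !sE /= kx k'y => /block_swap_descent xE /block_swap_descent yE.
by apply: val_inj; lia.
Qed.

Lemma odd_grassmannian_involution_block_swap s :
  grassmannian s -> involution s -> odd_inv s ->
  exists a j, [/\ odd j, a + j + j <= N & forall i : 'I_N, s i = block_swap a j i :> nat].
Proof.
move=> grass /eqP invo odd_s.
have ssE x : s (s x) = x by rewrite -{1}invo permK.
have [d dN incr] := grassmannian_incr grass.
have val_lt i : i < N -> perm_val s i < N by move=> _; exact: ltn_ord.
have valK i : i < N -> perm_val s (perm_val s i) = i.
  by move=> iN; rewrite {2}/perm_val perm_valE ssE inordK.
have [a [j [ajN valE]]] := incr_involution_block_swap val_lt valK incr dN.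
have sE (i : 'I_N) : s i = block_swap a j i :> nat by rewrite -perm_valE valE.
exists a, j; split=> //.
by move: odd_s; rewrite /odd_inv (inversions_block_swap ajN sE) oddM andbb.
Qed.

End GrassmannianPerm.

Definition odd_swap_count (n : nat) : nat := \sum_(j < n) odd j * (n - j.*2).

Lemma odd_swap_countS4 n : odd_swap_count n.+4 = odd_swap_count n + n.+2.
Proof.
rewrite /odd_swap_count 2!big_ord_recl 2!big_ord_recr /=.
have -> : n.+4 - n.+3.*2 = 0 by lia.
have -> : n.+4 - n.+2.*2 = 0 by lia.
rewrite !muln0 !addn0 mul0n add0n mul1n addnC; congr (_ + _).
by apply: eq_bigr => j _; rewrite /bump /=; congr (_ * _); lia.
Qed.

Lemma odd_swap_countE n : odd_swap_count n = n ^ 2 %/ 8.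
Proof.
elim/ltn_ind: n => -[|[|[|[|n]]]] IH; try by rewrite /odd_swap_count ?big_ord_recl big_ord0.
rewrite odd_swap_countS4 IH; last lia.
have -> : n.+4 ^ 2 = n ^ 2 + 8 * n.+2 by rewrite !expnS expn0; lia.
move: (n ^ 2) => n2; lia.
Qed.

Section Counting.

Variable n : nat.
Local Notation N := n.+1.

Definition swap_params := [set p : 'I_N.+1 * 'I_N.+1 | odd p.2 && (p.1 + p.2 + p.2 <= N)].

Lemma card_swap_params : #|swap_params| = odd_swap_count N.+1.
Proof.
rewrite -sum1_card big_mkcond /=.
transitivity (\sum_(a < N.+1) \sum_(j < N.+1) (if (a, j) \in swap_params then 1 else 0)).
  by rewrite pair_bigA; apply: eq_bigr => -[a j].
rewrite exchange_big /odd_swap_count; apply: eq_bigr => j _.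
case: (boolP (odd j)) => [j_odd|j_even]; last by rewrite big1 // => a _; rewrite inE (negPf j_even).
have -> : N.+1 - j.*2 = minn N.+1 (N.+1 - j.*2) by lia.
rewrite mul1n -sum_ltn; apply: eq_bigr => a _.
have -> : (a < N.+1 - j.*2) = (a + j + j <= N) by apply/idP/idP; lia.
by rewrite inE j_odd /=; case: ifP.
Qed.

Definition block_swap_fun (a j : nat) (i : 'I_N) : 'I_N :=
  if a + j + j <= N then inord (block_swap a j i) else i.

Lemma block_swap_funK a j : involutive (block_swap_fun a j).
Proof.
move=> i; rewrite /block_swap_fun; case: (boolP (a + j + j <= N)) => // ajN.
by apply: val_inj => /=; rewrite !inordK ?block_swapK // block_swap_lt.
Qed.

Definition block_swap_perm (p : 'I_N.+1 * 'I_N.+1) : 'S_N :=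
  perm (inv_inj (block_swap_funK p.1 p.2)).

Lemma block_swap_permE p : p \in swap_params ->
  forall i : 'I_N, block_swap_perm p i = block_swap p.1 p.2 i :> nat.
Proof.
rewrite inE => /andP[_ ajN] i.
by rewrite permE /block_swap_fun ajN inordK // block_swap_lt.
Qed.

Lemma block_swap_perm_inj : {in swap_params &, injective block_swap_perm}.
Proof.
move=> [a j] [a' j'] p_in p'_in eq_perm.
have swapE i : i < N -> block_swap a j i = block_swap a' j' i.
  move=> iN; have := congr1 (fun s : 'S_N => val (s (inord i))) eq_perm.
  by rewrite /= !block_swap_permE // inordK.
move: p_in p'_in; rewrite !inE /= => /andP[j_odd ajN] /andP[j'_odd a'j'N].
have j_gt0 : 0 < j by case: (nat_of_ord j) j_odd.
have j'_gt0 : 0 < j' by case: (nat_of_ord j') j'_odd.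
have [] := block_swap_inj j_gt0 j'_gt0 (swapE a ltac:(lia)) (swapE a' ltac:(lia)).
by move=> /val_inj -> /val_inj ->.
Qed.

Lemma odd_grassmannian_involutions :
  [set s : 'S_N | [&& grassmannian s, involution s & odd_inv s]] = block_swap_perm @: swap_params.
Proof.
apply/setP => s; rewrite inE; apply/and3P/imsetP => [[grass invo odd_s]|[p p_in ->]].
  have [a [j [j_odd ajN sE]]] := odd_grassmannian_involution_block_swap grass invo odd_s.
  have [aN jN] : a < N.+1 /\ j < N.+1 by lia.
  have p_in : (inord a, inord j) \in swap_params by rewrite inE /= !inordK // j_odd.
  exists (inord a, inord j) => //; apply/permP => i; apply: val_inj => /=.
  by rewrite sE block_swap_permE //= !inordK.
have sE := block_swap_permE p_in.
have swapK : involutive (block_swap_perm p) by move=> i; rewrite !permE block_swap_funK.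
move: p_in; rewrite inE => /andP[j_odd ajN]; split.
- exact: grassmannian_block_swap sE.
- by apply/eqP/permP => i; rewrite -{1}(swapK i) permK.
- by rewrite /odd_inv (inversions_block_swap ajN sE) oddM j_odd.
Qed.

End Counting.

Theorem mainTheorem19 (m : nat) : 1 <= m -> b m = (m.+1 ^ 2) %/ 8.
Proof.
case: m => [//|n] _.
rewrite /b odd_grassmannian_involutions card_in_imset; last exact: block_swap_perm_inj.
by rewrite card_swap_params odd_swap_countE.
Qed.
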